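(* Let $C$ be a cycle and let $\mathcal H,\mathcal K$ be families of vertex subsets of $C$ such that $(C,\mathcal H,\mathcal K)$ is strong $axax$-free. Then there is an outerplanar graph $Q$ with vertex set $\mathcal H$ such that for every $K\in\mathcal K$ the set $\mathcal H_K=\{H\in\mathcal H: H\cap K\ne\emptyset\}$ induces a connected subgraph of $Q$.
   Context: Let $C$ be a cycle with a fixed cyclic orientation; ''vertices $p_1,p_2,p_3,p_4$ in cyclic order'' means they are four distinct vertices met in this order when traversing $C$. Members of $\mathcal H,\mathcal K$ are arbitrary subsets of $V(C)$ (not necessarily inducing connected subgraphs of $C$). A pair $H,H'\in\mathcal H$ is an $axax$-pair if there are vertices $a_1,x_1,a_2,x_2$ in cyclic order with $a_1,a_2\in H\setminus H'$ and $x_1,x_2\in H'$; $(C,\mathcal H)$ is $axax$-free if it has no $axax$-pair. $(C,\mathcal H,\mathcal K)$ satisfies the intersection property if for all $H\in\mathcal H$, $K\in\mathcal K$ having vertices $h_1,k_1,h_2,k_2$ in cyclic order with $h_1,h_2\in H$, $k_1,k_2\in K$, we have $H\cap K\ne\emptyset$. $(C,\mathcal H,\mathcal K)$ is strong $axax$-free if $(C,\mathcal H)$ and $(C,\mathcal K)$ are both $axax$-free and the intersection property holds. A graph is outerplanar if it has a plane embedding with all vertices on the outer face. *)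

From mathcomp Require Import all_boot.
Set Implicit Arguments. Unset Strict Implicit. Unset Printing Implicit Defensive.

(* The cycle C has vertex set 'I_n, traversed in increasing index order
   0 -> 1 -> ... -> n-1 -> 0 (the fixed cyclic orientation). *)

Definition cyc_order4 (n : nat) (p1 p2 p3 p4 : 'I_n) : bool :=
  [|| [&& p1 < p2, p2 < p3 & p3 < p4],
      [&& p2 < p3, p3 < p4 & p4 < p1],
      [&& p3 < p4, p4 < p1 & p1 < p2]
    | [&& p4 < p1, p1 < p2 & p2 < p3] ].

Definition axax_pair (n : nat) (H H' : {set 'I_n}) : Prop :=
  exists a1 x1 a2 x2 : 'I_n,
    [/\ cyc_order4 a1 x1 a2 x2,
        a1 \in H :\: H', a2 \in H :\: H', x1 \in H' & x2 \in H'].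

Definition axax_free (n : nat) (F : {set {set 'I_n}}) : Prop :=
  forall H H', H \in F -> H' \in F -> ~ axax_pair H H'.

Definition intersection_property (n : nat) (HH KK : {set {set 'I_n}}) : Prop :=
  forall H K, H \in HH -> K \in KK ->
  forall h1 k1 h2 k2 : 'I_n,
    cyc_order4 h1 k1 h2 k2 -> h1 \in H -> h2 \in H -> k1 \in K -> k2 \in K ->
    H :&: K != set0.

Definition strong_axax_free (n : nat) (HH KK : {set {set 'I_n}}) : Prop :=
  [/\ axax_free HH, axax_free KK & intersection_property HH KK].

Definition simple_graph_on (T : finType) (V : {set T}) (Q : rel T) : Prop :=
  [/\ forall x y, Q x y -> Q y x,
      forall x, ~~ Q x x
    & forall x y, Q x y -> (x \in V) && (y \in V)].

(* Outerplanar: the vertices can be placed in distinct positions around a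
   circle (positions given by an injective pos : T -> nat on V, read
   cyclically) so that no two edges, drawn as chords, cross; i.e. there are no
   edges {a,b}, {c,d} with pos a < pos c < pos b < pos d. *)
Definition outerplanar (T : finType) (V : {set T}) (Q : rel T) : Prop :=
  exists pos : T -> nat,
    {in V &, injective pos} /\
    (forall a b c d, Q a b -> Q c d ->
       ~ [/\ pos a < pos c, pos c < pos b & pos b < pos d]).

Definition induces_connected (T : finType) (Q : rel T) (S : {set T}) : Prop :=
  forall x y, x \in S -> y \in S ->
    connect [rel u v | [&& Q u v, u \in S & v \in S]] x y.

From mathcomp Require Import all_boot.
Set Implicit Arguments. Unset Strict Implicit. Unset Printing Implicit Defensive.

(* Order the members of HH by their least vertex, breaking ties
   colexicographically.  Axax-freeness of HH and KK together with the
   intersection property then forbid an alternation H1 < H2 < H3 < H4 in which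
   K' meets H1 and H3 but not H2, while K meets H2 and H4 but not H1 and H3.
   Place HH on a circle in this order and add the vertices one at a time,
   joining each new vertex, for every K through it, to the largest earlier
   vertex of K not hidden under an existing chord.  Chords never cross, each
   K stays connected, and the missing alternation is exactly what guarantees
   that a vertex of K stays visible for as long as K has vertices to come. *)

Definition alternation_free (I : Type) (T : I -> pred nat) : Prop :=
  forall k k' a i b f, a < i -> i < b -> b < f ->
    T k' a -> ~~ T k a -> T k i -> ~~ T k' i -> T k' b -> ~~ T k b -> T k f ->
    False.

Definition noncrossing (E : seq (nat * nat)) : Prop :=
  forall e e', e \in E -> e' \in E -> ~~ [&& e.1 < e'.1, e'.1 < e.2 & e.2 < e'.2].

Definition adj (E : seq (nat * nat)) (u v : nat) : bool :=
  ((u, v) \in E) || ((v, u) \in E).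

Inductive joined (E : seq (nat * nat)) (P : pred nat) : nat -> nat -> Prop :=
  | joined_refl x : joined E P x x
  | joined_step x y z : adj E x y -> P x -> P y -> joined E P y z -> joined E P x z.

Lemma joined_trans E P x y z : joined E P x y -> joined E P y z -> joined E P x z.
Proof. by elim=> // x1 y1 z1 xy Px Py _ IH /IH; apply: joined_step. Qed.

Lemma joined_sym E P x y : joined E P x y -> joined E P y x.
Proof.
elim=> [x1|x1 y1 z1 xy Px Py _ IH]; first exact: joined_refl.
apply: joined_trans IH (joined_step _ _ _ (joined_refl _ _ _)) => //.
by rewrite /adj orbC.
Qed.

Lemma joined_sub E E' P x y :
  {subset E <= E'} -> joined E P x y -> joined E' P x y.
Proof.
move=> sEE'; elim=> [x1|x1 y1 z1 /orP xy Px Py _ IH]; first exact: joined_refl.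
by apply: joined_step IH => //; rewrite /adj; case: xy => /sEE' ->; rewrite ?orbT.
Qed.

Section Greedy.
Variables (I : finType) (T : I -> pred nat).
Implicit Types (E : seq (nat * nat)) (k : I).

Definition uncovered E v : bool := all (fun e : nat * nat => ~~ (e.1 < v < e.2)) E.

Definition open E j k : bool := [exists v : 'I_j, T k v && uncovered E v].

Definition anchor E j k : nat := \max_(v < j | T k v && uncovered E v) v.

Definition new_edges E j : seq (nat * nat) :=
  [seq (anchor E j k, j) | k <- enum I & T k j && open E j k].

Definition extend E j : seq (nat * nat) := E ++ new_edges E j.

Fixpoint greedy (j : nat) : seq (nat * nat) :=
  if j is j'.+1 then extend (greedy j') j' else [::].

(* The last clause keeps the construction going: a hyperedge that continues
   beyond [j] still has a vertex below [j] that is not hidden under an edge. *)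
Definition invariant j E : Prop :=
  [/\ forall e, e \in E -> e.1 < e.2 < j,
      noncrossing E,
      forall k x y, x < j -> y < j -> T k x -> T k y -> joined E (T k) x y
    & forall k x f, x < j -> j <= f -> T k x -> T k f -> open E j k].

Lemma openP E j k :
  reflect (exists2 v, v < j & T k v && uncovered E v) (open E j k).
Proof.
by apply: (iffP existsP) => [[v]|[v vj]]; [exists v | exists (Ordinal vj)].
Qed.

Lemma anchor_spec E j k : open E j k ->
  [/\ anchor E j k < j, T k (anchor E j k), uncovered E (anchor E j k)
    & forall v, v < j -> T k v -> uncovered E v -> v <= anchor E j k].
Proof.
case/existsP=> v0 Pv0; rewrite /anchor (bigmax_eq_arg v0) //.
case: arg_maxnP => // v /andP[Tv Uv] vmax.
by split=> // w wj Tw Uw; apply: (vmax (Ordinal wj)); rewrite /= Tw.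
Qed.

Lemma new_edgesP E j e : e \in new_edges E j ->
  exists2 k, T k j && open E j k & e = (anchor E j k, j).
Proof. by case/mapP=> k; rewrite mem_filter => /andP[? _] ->; exists k. Qed.

Lemma mem_new_edges E j k :
  T k j -> open E j k -> (anchor E j k, j) \in new_edges E j.
Proof. by move=> Tj ok; apply/mapP; exists k; rewrite // mem_filter Tj ok mem_enum. Qed.

Lemma new_edge_uncovered E j e : e \in new_edges E j ->
  [/\ e.1 < j, e.2 = j & uncovered E e.1].
Proof. by case/new_edgesP=> k /andP[_ /anchor_spec[aj _ Ua _]] ->. Qed.

Hypothesis Tfree : alternation_free T.

Section Step.
Variables (j : nat) (E : seq (nat * nat)).
Hypothesis inv : invariant j E.

Lemma extend_sorted e : e \in extend E j -> e.1 < e.2 < j.+1.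
Proof.
have [Esorted _ _ _] := inv.
rewrite mem_cat => /orP[/Esorted /andP[-> /ltnW] //|/new_edge_uncovered[e1j -> _]].
by rewrite e1j /=.
Qed.

Lemma extend_noncrossing : noncrossing (extend E j).
Proof.
have [Esorted Enc _ _] := inv.
move=> e e'; rewrite !mem_cat => /orP[eE|eN] /orP[e'E|e'N].
- exact: Enc.
- have [_ _ /allP/(_ e eE)] := new_edge_uncovered e'N.
  by apply: contra => /and3P[-> -> _].
- have [_ -> _] := new_edge_uncovered eN; have /andP[_ e'j] := Esorted e' e'E.
  by rewrite (ltnNge j) (ltnW e'j) !andbF.
- have [_ -> _] := new_edge_uncovered eN; have [_ -> _] := new_edge_uncovered e'N.
  by rewrite ltnn !andbF.
Qed.

Lemma extend_joined k x y : x < j.+1 -> y < j.+1 -> T k x -> T k y ->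
  joined (extend E j) (T k) x y.
Proof.
have [_ _ Ejoined Eopen] := inv.
have sub : {subset E <= extend E j} by move=> e; rewrite mem_cat => ->.
have to_j z : z < j -> T k z -> T k j -> joined (extend E j) (T k) z j.
  move=> zj Tz Tj; have ok := Eopen k z j zj (leqnn j) Tz Tj.
  have [aj Ta _ _] := anchor_spec ok.
  apply: joined_trans (joined_sub sub (Ejoined _ _ _ zj aj Tz Ta)) _.
  apply: joined_step (joined_refl _ _ _) => //.
  by rewrite /adj mem_cat mem_new_edges ?orbT.
rewrite !ltnS [x <= j]leq_eqVlt [y <= j]leq_eqVlt.
move=> /predU1P[->|xj] /predU1P[->|yj] Tx Ty.
- exact: joined_refl.
- exact/joined_sym/to_j.
- exact: to_j.
- exact: joined_sub sub (Ejoined _ _ _ xj yj Tx Ty).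
Qed.

Lemma extend_open k x f : x < j.+1 -> j.+1 <= f -> T k x -> T k f ->
  open (extend E j) j.+1 k.
Proof.
have [Esorted _ _ Eopen] := inv.
move=> xj jf Tx Tf; apply/openP.
have uncovered_cat u : uncovered (extend E j) u =
    uncovered E u && uncovered (new_edges E j) u by rewrite /uncovered all_cat.
case Tj: (T k j).
  exists j => //; rewrite Tj uncovered_cat /=; apply/andP; split; apply/allP=> e.
    by move/Esorted=> /andP[_ e2j]; rewrite negb_and orbC -leqNgt (ltnW e2j).
  by case/new_edge_uncovered=> _ -> _; rewrite ltnn andbF.
have [v0 v0j /andP[Tv0 Uv0]] : exists2 v0, v0 < j & T k v0 && uncovered E v0.
  apply/openP/(Eopen k x f) => //; last exact: ltnW.
  by rewrite ltn_neqAle -ltnS xj andbT; apply: contraFneq Tj => <-.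
have [N0|[e0 e0N]] : new_edges E j = [::] \/ exists e0, e0 \in new_edges E j.
  by case: (new_edges E j) => [|e0 ?]; [left | right; exists e0; rewrite inE eqxx].
  by exists v0; rewrite 1?ltnW // uncovered_cat N0 Tv0 Uv0.
have /ex_minnP[t0 /hasP[e1 e1N /eqP e1t0] t0min] :
  exists t, has (fun e : nat * nat => e.1 == t) (new_edges E j).
  by exists e0.1; apply/hasP; exists e0.
have [k' /andP[Tk'j ok'] e1E] := new_edgesP e1N; rewrite e1E /= in e1t0.
have [t0j Tk't0 Ut0 t0max] := anchor_spec ok'; rewrite e1t0 in t0j Tk't0 Ut0 t0max.
have keep u : u <= t0 -> uncovered E u -> uncovered (extend E j) u.
  move=> ut0 Uu; rewrite uncovered_cat Uu; apply/allP=> e eN.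
  have t0e : t0 <= e.1 by apply: t0min; apply/hasP; exists e.
  by rewrite negb_and -leqNgt (leq_trans ut0 t0e).
case Tt0: (T k t0); first by exists t0; rewrite 1?ltnW // Tt0 keep.
have [v0t0|t0v0] := leqP v0 t0; first by exists v0; rewrite 1?ltnW // Tv0 keep.
(* Otherwise [t0 < v0 < j < f] alternate between [k'] and [k]. *)
exfalso; apply: (Tfree t0v0 v0j jf Tk't0 _ Tv0 _ Tk'j); rewrite ?Tt0 ?Tj //.
by apply: contraTN t0v0 => Tk'v0; rewrite -leqNgt t0max.
Qed.

End Step.

Lemma greedy_invariant j : invariant j (greedy j).
Proof.
elim: j => [|j [Es Enc Ej Eo]] /=; first by split.
split; [exact: extend_sorted | exact: extend_noncrossing
       | exact: extend_joined | exact: extend_open].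
Qed.

Theorem noncrossing_support m :
  exists E, [/\ forall e, e \in E -> e.1 < e.2, noncrossing E
    & forall k x y, x < m -> y < m -> T k x -> T k y -> joined E (T k) x y].
Proof.
have [Es Enc Ej _] := greedy_invariant m.
by exists (greedy m); split=> // e /Es /andP[].
Qed.

End Greedy.

Section Cycle.
Variable n : nat.
Implicit Types (X Y A B : {set 'I_n}).

(* [axax_pair H H'] is by definition [interleaved (H :\: H') H']. *)
Definition interleaved X Y : Prop :=
  exists x1 y1 x2 y2 : 'I_n,
    [/\ cyc_order4 x1 y1 x2 y2, x1 \in X, x2 \in X, y1 \in Y & y2 \in Y].

Lemma cyc_order4_rot (p1 p2 p3 p4 : 'I_n) :
  cyc_order4 p1 p2 p3 p4 -> cyc_order4 p2 p3 p4 p1.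
Proof. by rewrite /cyc_order4 => /or4P[] h; rewrite h ?orbT. Qed.

Lemma interleavedC X Y : interleaved X Y -> interleaved Y X.
Proof.
case=> x1 [y1 [x2 [y2 [c x1X x2X y1Y y2Y]]]].
by exists y1, x2, y2, x1; split=> //; apply: cyc_order4_rot.
Qed.

Lemma interleaved_sorted X Y (x1 y1 x2 y2 : 'I_n) :
  x1 < y1 -> y1 < x2 -> x2 < y2 ->
  x1 \in X -> x2 \in X -> y1 \in Y -> y2 \in Y -> interleaved X Y.
Proof.
move=> lt1 lt2 lt3 *; exists x1, y1, x2, y2; split=> //.
by rewrite /cyc_order4 lt1 lt2 lt3.
Qed.

Lemma interleaved_meet (HH KK : {set {set 'I_n}}) H K :
  intersection_property HH KK -> H \in HH -> K \in KK ->
  interleaved H K -> ~~ [disjoint H & K].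
Proof.
move=> ip HH_H KK_K [h1 [k1 [h2 [k2 [c h1H h2H k1K k2K]]]]].
by rewrite -setI_eq0; apply: (ip H K HH_H KK_K h1 k1 h2 k2 c).
Qed.

Lemma disjoint_ltgt X Y (x y : 'I_n) :
  [disjoint X & Y] -> x \in X -> y \in Y -> (x < y) || (y < x).
Proof.
move=> dXY xX yY; rewrite -neq_ltn; apply: contraTneq yY => /val_inj <-.
by rewrite (disjointFr dXY xX).
Qed.

(* The empty set gets [n], beyond every vertex. *)
Definition least A : nat :=
  if [pick x in A] is Some x0 then val [arg min_(y < x0 in A) val y] else n.

Lemma least_le A (x : 'I_n) : x \in A -> least A <= x.
Proof.
move=> xA; rewrite /least; case: pickP => [x0 x0A|/(_ x)]; last by rewrite xA.
by case: arg_minnP => // y _ /(_ x xA).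
Qed.

Lemma least_mem A (x : 'I_n) : x \in A -> exists2 y : 'I_n, y \in A & val y = least A.
Proof.
move=> xA; rewrite /least; case: pickP => [x0 x0A|/(_ x)]; last by rewrite xA.
by case: arg_minnP => // y yA _; exists y.
Qed.

Definition code A : nat := \sum_(x in A) 2 ^ x.

Lemma code_lt_pow A k : (forall x : 'I_n, x \in A -> x < k) -> code A < 2 ^ k.
Proof.
elim: k A => [|k IH] A Ak.
  by rewrite /code big_pred0 // => x; apply/negbTE/negP => /Ak.
rewrite /code (big_setID [set x : 'I_n | x < k]) /= expnS mul2n -addnn -addSn.
apply: leq_add; first by apply: IH => x; rewrite !inE => /andP[].
have top x : x \in A :\: [set x : 'I_n | x < k] -> val x = k.
  rewrite !inE -leqNgt => /andP[kx /Ak]; rewrite ltnS => xk.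
  by apply/eqP; rewrite eqn_leq xk.
rewrite (eq_bigr (fun=> 2 ^ k)) => [|x /top -> //].
rewrite sum_nat_const -[leqRHS]mul1n leq_mul2r; apply/orP; right.
apply/card_le1_eqP => x y /top xk /top yk.
by apply: val_inj; rewrite xk yk.
Qed.

Lemma code_ltn_max A B (d : 'I_n) :
  d \in A :\: B -> (forall y : 'I_n, y \in B :\: A -> y < d) -> code B < code A.
Proof.
move=> dAB dmax; rewrite /code (big_setID A) [X in _ < X](big_setID B) setIC /= ltn_add2l.
apply: (leq_trans (code_lt_pow dmax)).
by rewrite (bigD1 d) //= leq_addr.
Qed.

Lemma code_leq_max A B : A != B -> code B <= code A ->
  exists2 d : 'I_n, d \in A :\: B & forall y : 'I_n, y \in B :\: A -> y < d.
Proof.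
move=> nAB BA.
have /set0Pn[x xD] : (A :\: B) :|: (B :\: A) != set0.
  move: nAB; apply: contraNneq => /setP D0; apply/eqP/setP => x.
  by move: (D0 x); rewrite !inE; case: (x \in A); case: (x \in B).
case: (arg_maxnP (fun y : 'I_n => val y) xD) => d dD dmax.
have below y : y \in (A :\: B) :|: (B :\: A) -> y != d -> y < d.
  move=> yD ynd; have /= yled := dmax y yD.
  by rewrite ltn_neqAle yled andbT; apply: contra ynd => /eqP/ord_inj ->.
have ne_d y X Y : y \in X :\: Y -> d \in Y :\: X -> y != d.
  move=> yXY; apply: contraTneq => <-; rewrite !inE in yXY *.
  by case/andP: yXY => /negbTE -> ->.
have {}dD : d \in (A :\: B) :|: (B :\: A) := dD.
case/setUP: dD => [dAB|dBA].
  by exists d => // y yBA; apply: below (ne_d _ _ _ yBA dAB); rewrite inE yBA orbT.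
suff: code A < code B by rewrite ltnNge BA.
by apply: (code_ltn_max dBA) => y yAB; apply: below (ne_d _ _ _ yAB dBA); rewrite inE yAB.
Qed.

(* Ties are broken colexicographically: the set holding the largest element
   of the symmetric difference comes first. *)
Definition setle A B : bool :=
  (least A < least B) || (least A == least B) && (code B <= code A).

Lemma setle_total : total setle.
Proof. by move=> A B; rewrite /setle; case: ltngtP => //= _; apply: leq_total. Qed.

Lemma setle_trans : transitive setle.
Proof.
move=> B A C; rewrite /setle => /orP[lt1|/andP[/eqP e1 c1]] /orP[lt2|/andP[/eqP e2 c2]].
- by rewrite (ltn_trans lt1 lt2).
- by rewrite -e2 lt1.
- by rewrite e1 lt2.
- by rewrite e1 e2 eqxx (leq_trans c2 c1) orbT.
Qed.

Lemma setle_least A B : setle A B -> least A <= least B.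
Proof. by case/orP=> [/ltnW|/andP[/eqP -> _]]. Qed.

Lemma setle_colex A B : setle A B -> A != B -> least A = least B ->
  exists2 d : 'I_n, d \in A :\: B & forall y : 'I_n, y \in B :\: A -> y < d.
Proof. by rewrite /setle => + nAB eAB; rewrite eAB ltnn eqxx => /code_leq_max; apply. Qed.

Lemma setle_interleaved X Y (x y : 'I_n) : setle X Y -> X != Y ->
  x \in X :\: Y -> y \in Y :\: X -> least Y < x -> x < y ->
  interleaved (X :\: Y) Y.
Proof.
move=> XY nXY xXY yYX Yx xy.
have yY : y \in Y by move: yYX; rewrite inE => /andP[].
have xX : x \in X by move: xXY; rewrite inE => /andP[].
have [x0 x0X ex0] := least_mem xX.
have [y0 y0Y ey0] := least_mem yY.
have [lXY|eXY] : least X < least Y \/ least X = least Y.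
  by case: (ltngtP (least X) (least Y)) (setle_least XY) => // [|->]; [left | right].
- have x0XY : x0 \in X :\: Y.
    by rewrite inE x0X andbT; apply: contraTN lXY => /least_le; rewrite -ex0 -leqNgt.
  apply: (interleaved_sorted (x1 := x0) (y1 := y0) (x2 := x) (y2 := y));
    by rewrite ?ex0 ?ey0.
- have [d dXY dmax] := setle_colex XY nXY eXY.
  apply/interleavedC/(interleaved_sorted (x1 := y0) (y1 := x) (x2 := y) (y2 := d)) => //.
  + by rewrite ey0.
  + exact: dmax.
Qed.

Lemma setle_least_ltn X Y (Z : {set 'I_n}) (x y : 'I_n) : setle X Y ->
  x \in X -> val x = least X -> y \in Y -> [disjoint X & Z] -> y \in Z -> x < y.
Proof.
move=> XY xX ex yY dXZ yZ; case/orP: (disjoint_ltgt dXZ xX yZ) => // yx.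
by have := leq_trans (setle_least XY) (least_le yY); rewrite -ex leqNgt yx.
Qed.

Lemma setle_no_alternation (A I B F K K' : {set 'I_n}) (a i b f : 'I_n) :
  setle A I -> A != I -> setle I B -> I != B -> setle B F ->
  ~ interleaved (A :\: I) I -> ~ interleaved (I :\: B) B ->
  ~ interleaved (K' :\: K) K ->
  ~ interleaved A K -> ~ interleaved B K -> ~ interleaved I K' ->
  [disjoint A & K] -> [disjoint B & K] -> [disjoint I & K'] ->
  a \in A -> a \in K' -> i \in I -> i \in K -> b \in B -> b \in K' ->
  f \in F -> f \in K -> False.
Proof.
move=> AI nAI IB nIB BF nAxI nIxB nKxK nAK nBK nIK' dAK dBK dIK'.
move=> aA aK' iI iK bB bK' fF fK.
have aK'K : a \in K' :\: K by rewrite inE aK' (disjointFr dAK aA).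
have bK'K : b \in K' :\: K by rewrite inE bK' (disjointFr dBK bB).
have [be beB ebe] := least_mem bB.
case/orP: (disjoint_ltgt dBK beB iK) => [bei|ibe].
- have [io ioI eio] := least_mem iI.
  have iIB : i \in I :\: B by rewrite inE iI (disjointFl dBK iK).
  have bBI : b \in B :\: I by rewrite inE bB (disjointFl dIK' bK').
  have bi : b < i.
    case/orP: (disjoint_ltgt dBK bB iK) => // ib.
    by case: nIxB; apply: (setle_interleaved IB nIB iIB bBI); rewrite -?ebe.
  have iob : io < b := setle_least_ltn IB ioI eio bB dIK' bK'.
  have ioa : io < a.
    case/orP: (disjoint_ltgt dIK' ioI aK') => // aio.
    by case: nIK'; apply/interleavedC/(interleaved_sorted aio iob bi).
  have ai : a < i.
    case/orP: (disjoint_ltgt dAK aA iK) => // ia.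
    by case: nIK'; apply: (interleaved_sorted iob bi ia).
  have aAI : a \in A :\: I by rewrite inE aA (disjointFl dIK' aK').
  have iIA : i \in I :\: A by rewrite inE iI (disjointFl dAK iK).
  by case: nAxI; apply: (setle_interleaved AI nAI aAI iIA); rewrite -?eio.
- have bef : be < f := setle_least_ltn BF beB ebe fF dBK fK.
  have ib : i < b by apply: leq_trans ibe _; rewrite ebe least_le.
  have bf : b < f.
    case/orP: (disjoint_ltgt dBK bB fK) => // fb.
    by case: nBK; apply/interleavedC/(interleaved_sorted ibe bef fb).
  case/orP: (disjoint_ltgt dAK aA iK) => [ai|ia].
    by case: nKxK; apply: (interleaved_sorted ai ib bf).
  case/orP: (disjoint_ltgt dAK aA fK) => [af|fa].
    have [al alA eal] := least_mem aA.
    have ali : al < i := setle_least_ltn AI alA eal iI dAK iK.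
    by case: nAK; apply: (interleaved_sorted ali ia af).
  by case: nKxK; apply/interleavedC/(interleaved_sorted ib bf fa).
Qed.

End Cycle.

Section SortedFamily.
Variables (n : nat) (HH KK : {set {set 'I_n}}) (s : seq {set 'I_n}).
Hypotheses (HKfree : strong_axax_free HH KK) (s_sorted : sorted (@setle n) s).
Hypotheses (s_uniq : uniq s) (s_HH : {subset s <= HH}).

Definition meets (K : {set 'I_n}) (p : nat) : bool :=
  [&& K \in KK, p < size s & nth set0 s p :&: K != set0].

Lemma meets_alternation_free : alternation_free meets.
Proof.
case: HKfree => freeH freeK ip.
have setle_nth p q : p < q -> q < size s -> setle (nth set0 s p) (nth set0 s q).
  move=> pq qs; apply: (sorted_ltn_nth (@setle_trans n)); rewrite ?inE //.
  exact: ltn_trans pq qs.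
have neq_nth p q : p < q -> q < size s -> nth set0 s p != nth set0 s q.
  by move=> pq qs; rewrite nth_uniq ?(ltn_trans pq qs) // ltn_eqF.
have HH_nth p : p < size s -> nth set0 s p \in HH by move=> ps; apply/s_HH/mem_nth.
have unmet K p : K \in KK -> p < size s -> ~~ meets K p -> [disjoint nth set0 s p & K].
  by move=> KK_K ps; rewrite /meets KK_K ps negbK setI_eq0.
have sep X Y : X \in HH -> Y \in KK -> [disjoint X & Y] -> ~ interleaved X Y.
  by move=> XH YK dXY /(interleaved_meet ip XH YK); rewrite dXY.
move=> K K' a i b f ai ib bf /and3P[KK_K' a_s aK'] Nka /and3P[KK_K i_s iK] Nk'i.
move=> /and3P[_ b_s bK'] Nkb /and3P[_ f_s fK].
have dAK := unmet K a KK_K a_s Nka; have dBK := unmet K b KK_K b_s Nkb.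
have dIK' := unmet K' i KK_K' i_s Nk'i.
case/set0Pn: aK' => x /setIP[xA xK']; case/set0Pn: iK => y /setIP[yI yK].
case/set0Pn: bK' => z /setIP[zB zK']; case/set0Pn: fK => w /setIP[wF wK].
apply: (setle_no_alternation (setle_nth a i ai i_s) (neq_nth a i ai i_s)
  (setle_nth i b ib b_s) (neq_nth i b ib b_s) (setle_nth b f bf f_s)
  (freeH _ _ (HH_nth a a_s) (HH_nth i i_s)) (freeH _ _ (HH_nth i i_s) (HH_nth b b_s))
  (freeK _ _ KK_K' KK_K) (sep _ _ (HH_nth a a_s) KK_K dAK)
  (sep _ _ (HH_nth b b_s) KK_K dBK) (sep _ _ (HH_nth i i_s) KK_K' dIK')
  dAK dBK dIK' xA xK' yI yK zB zK' wF wK).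
Qed.

End SortedFamily.

Section EdgeGraph.
Variables (T : finType) (s : seq T) (E : seq (nat * nat)).
Hypothesis E_sorted : forall e, e \in E -> e.1 < e.2.

Definition edge_graph : rel T :=
  fun u v => [&& u \in s, v \in s & adj E (index u s) (index v s)].

Lemma adj_ltn p q : p < q -> adj E p q -> (p, q) \in E.
Proof. by move=> pq /orP[//|/E_sorted /= qp]; move: (ltn_trans pq qp); rewrite ltnn. Qed.

Lemma edge_graph_simple (V : {set T}) : s =i V -> simple_graph_on V edge_graph.
Proof.
move=> sV; split.
- by move=> u v /and3P[us vs uv]; rewrite /edge_graph vs us /adj orbC.
- move=> u; apply/negP; rewrite /edge_graph /adj orbb.
  by case/and3P=> _ _ /E_sorted; rewrite ltnn.
- by move=> u v /and3P[us vs _]; rewrite -(sV u) -(sV v) us vs.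
Qed.

Lemma edge_graph_outerplanar (V : {set T}) :
  s =i V -> noncrossing E -> outerplanar V edge_graph.
Proof.
move=> sV Enc; exists (index^~ s); split=> [u v uV vV|a b c d].
  by apply: (index_inj u); rewrite sV.
move=> /and3P[_ _ ab] /and3P[_ _ cd] [ac cb bd].
have := Enc _ _ (adj_ltn (ltn_trans ac cb) ab) (adj_ltn (ltn_trans cb bd) cd).
by rewrite /= ac cb bd.
Qed.

Lemma edge_graph_connect (S : {set T}) (P : pred nat) x0 p q : uniq s ->
  (forall p, P p -> (p < size s) && (nth x0 s p \in S)) -> joined E P p q ->
  connect [rel u v | [&& edge_graph u v, u \in S & v \in S]] (nth x0 s p) (nth x0 s q).
Proof.
move=> s_uniq PS; elim=> [r|r t u rt Pr Pt _ IH]; first exact: connect0.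
apply: connect_trans IH; apply: connect1.
have /andP[r_s rS] := PS r Pr; have /andP[t_s tS] := PS t Pt.
by rewrite /= /edge_graph !mem_nth // !index_uniq // rt rS tS.
Qed.

End EdgeGraph.

Theorem mainTheorem14 (n : nat) (HH KK : {set {set 'I_n}}) :
  3 <= n ->
  strong_axax_free HH KK ->
  exists Q : rel {set 'I_n},
    [/\ simple_graph_on HH Q,
        outerplanar HH Q
      & forall K, K \in KK ->
          induces_connected Q [set H in HH | H :&: K != set0]].
Proof.
move=> _ HKfree.
pose s := sort (@setle n) (enum HH).
have mem_s : s =i HH by move=> H; rewrite mem_sort mem_enum.
have s_uniq : uniq s by rewrite sort_uniq enum_uniq.
have s_sorted : sorted (@setle n) s := sort_sorted (@setle_total n) _.
have s_HH : {subset s <= HH} by move=> H; rewrite mem_s.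
have Tfree := meets_alternation_free HKfree s_sorted s_uniq s_HH.
have [E [E_sorted Enc Ejoined]] := noncrossing_support Tfree (size s).
exists (edge_graph s E); split.
- exact: edge_graph_simple.
- exact: edge_graph_outerplanar.
move=> K KK_K x y; rewrite !inE => /andP[xH xK] /andP[yH yK].
rewrite -[x](nth_index set0 (_ : x \in s)) ?mem_s //.
rewrite -[y](nth_index set0 (_ : y \in s)) ?mem_s //.
apply: (edge_graph_connect (P := meets KK s K)) => //.
  by move=> p /and3P[_ ps pK]; rewrite ps !inE -mem_s mem_nth.
have meets_index z : z \in HH -> z :&: K != set0 -> meets KK s K (index z s).
  by move=> zH zK; rewrite /meets KK_K index_mem mem_s zH nth_index ?mem_s.
by apply: Ejoined; rewrite ?index_mem ?mem_s ?meets_index.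
Qed.
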